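(* Let $a,b$ be Laurent polynomials with symmetry types $\mathrm{S}a(z)=\epsilon_az^{c_a}$ and $\mathrm{S}b(z)=\epsilon_bz^{c_b}$ ($\epsilon_a,\epsilon_b\in\{\pm1\}$, $c_a,c_b\in\mathbb Z$), with $b\neq0$. (i) If $\epsilon_a\epsilon_b=1$, or $c_a-c_b$ is odd (i.e. in each of the cases $\epsilon_a\epsilon_b=1$, $c_a-c_b$ odd; $\epsilon_a\epsilon_b=-1$, $c_a-c_b$ odd; $\epsilon_a\epsilon_b=1$, $c_a-c_b$ even), then one can construct a Laurent polynomial $q$ with symmetry such that $r(z):=a(z)-b(z)q(z)$ satisfies $\mathrm{len}(r)<\mathrm{len}(b)$ and $\mathrm{S}r(z)=\mathrm{S}a(z)=\mathrm{S}b(z)\,\mathrm{S}q(z)$. (ii) If $\epsilon_a\epsilon_b=-1$ and $c_a-c_b$ is even, then one can construct a Laurent polynomial $q$ with symmetry such that $r(z):=a(z)-b(z)q(z)$ satisfies $\mathrm{len}(r)\le\mathrm{len}(b)$ and $\mathrm{S}r(z)=\mathrm{S}a(z)=\mathrm{S}b(z)\,\mathrm{S}q(z)$.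
   Context: Laurent polynomial $u(z)=\sum_ku(k)z^k$ with finitely many nonzero complex coefficients. $u$ has symmetry of type $\epsilon z^c$ if $u(z)=\epsilon z^cu(z^{-1})$; for nonzero $u$, $\mathrm{S}u(z):=u(z)/u(z^{-1})$; the zero polynomial has symmetry of every type. For nonzero $u$, $\mathrm{len}(u):=\max\{k:u(k)\ne0\}-\min\{k:u(k)\neq0\}$, and $\mathrm{len}(0):=-\infty$. *)

From mathcomp Require Import all_boot all_algebra.
From mathcomp Require Import reals.
From mathcomp.real_closed Require Import complex.
Set Implicit Arguments. Unset Strict Implicit. Unset Printing Implicit Defensive.
Import GRing.Theory Num.Theory.
Local Open Scope ring_scope.

(* A Laurent polynomial over a ring K is represented by a pair (p, n)
   standing for z^(-n) * p(z).  Only its coefficient function [lcoef] is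
   ever inspected, so the non-uniqueness of the representation is harmless. *)
Definition laurent (K : nzRingType) := ({poly K} * nat)%type.

Definition lcoef (K : nzRingType) (u : laurent K) (k : int) : K :=
  match (k + (u.2)%:Z)%R with Posz m => u.1`_m | Negz _ => 0 end.

Definition lmul (K : nzRingType) (u v : laurent K) : laurent K :=
  (u.1 * v.1, (u.2 + v.2)%N).
Definition lsub (K : nzRingType) (u v : laurent K) : laurent K :=
  (u.1 * 'X^(v.2) - v.1 * 'X^(u.2), (u.2 + v.2)%N).

Definition lzero (K : nzRingType) (u : laurent K) := forall k, lcoef u k = 0.

(* u has symmetry of type eps z^c:  u(z) = eps z^c u(z^-1),
   i.e. coefficientwise u(k) = eps * u(c - k) for all k. *)
Definition lsym_type (K : nzRingType) (u : laurent K) (eps : K) (c : int) :=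
  forall k : int, lcoef u k = eps * lcoef u (c - k).

Definition is_len (K : nzRingType) (u : laurent K) (n : int) :=
  exists kmin kmax : int,
    [/\ lcoef u kmin != 0, lcoef u kmax != 0,
        (forall k, lcoef u k != 0 -> kmin <= k <= kmax) & n = kmax - kmin].

(* len(u) < len(v) and len(u) <= len(v), with len(0) = -oo *)
Definition len_lt (K : nzRingType) (u v : laurent K) :=
  (lzero u /\ ~ lzero v) \/
  exists nu nv, [/\ is_len u nu, is_len v nv & nu < nv].
Definition len_le (K : nzRingType) (u v : laurent K) :=
  lzero u \/ exists nu nv, [/\ is_len u nu, is_len v nv & nu <= nv].

From mathcomp Require Import all_boot all_algebra.
From mathcomp Require Import reals.
From mathcomp.real_closed Require Import complex.
From mathcomp Require Import zify ring.
Set Implicit Arguments. Unset Strict Implicit. Unset Printing Implicit Defensive.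
Import GRing.Theory Num.Theory.
Local Open Scope ring_scope.

(* Division from both ends.  Keep r = a - b q of the symmetry type of a and
   supported in a window [s, c_a - s].  While the window is longer than b,
   adding y z^j + eps_a eps_b y z^(c_a - c_b - j) to q, with z^j b ending at
   the top of the window, keeps q and b q symmetric and cancels the top
   coefficient of r, hence by symmetry also its bottom one.  When the window
   has exactly the length of b the two monomials coincide; the single monomial
   y z^j keeps q symmetric only when eps_a eps_b = 1, and when c_a - c_b is odd
   that window length is never reached, for parity reasons. *)

Definition supported (K : nzRingType) (f : int -> K) (lo hi : int) :=
  forall k, f k != 0 -> lo <= k <= hi.

Definition ladd (K : nzRingType) (u v : laurent K) : laurent K :=
  (u.1 * 'X^(v.2) + v.1 * 'X^(u.2), (u.2 + v.2)%N).

(* x z^j, represented as z^-n * x z^|j| with n = |j| - j *)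
Definition lmono (K : nzRingType) (x : K) (j : int) : laurent K :=
  (x *: 'X^(absz j), absz ((absz j)%:Z - j)).

Definition ldeg (K : nzRingType) (u : laurent K) : int :=
  (size u.1)%:Z - 1 - (u.2)%:Z.

Section Coefficients.

Variable K : nzRingType.
Implicit Types (p : {poly K}) (u v : laurent K) (x e : K) (c j k s : int).

Lemma supported_eq0 (f : int -> K) lo hi k :
  supported f lo hi -> (k < lo) || (hi < k) -> f k = 0.
Proof.
by move=> sf hk; apply/eqP; apply: contraLR hk => /sf /andP[]; lia.
Qed.

Lemma lcoefE u k :
  lcoef u k = if 0 <= k + (u.2)%:Z then u.1`_(absz (k + (u.2)%:Z)) else 0.
Proof. by rewrite /lcoef; case: (k + _). Qed.

Lemma lcoef_shift p (n n' : nat) k k' :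
  k + n%:Z = k' + n'%:Z -> lcoef (p, n) k = lcoef (p, n') k'.
Proof. by rewrite /lcoef /= => ->. Qed.

Lemma lcoef_mulXn p (n i : nat) k :
  lcoef (p * 'X^i, n) k = lcoef (p, n) (k - i%:Z).
Proof.
rewrite !lcoefE coefMXn /=.
case: ifP => h1; case: ifP => h2 //; try case: ifP => h3 //.
all: first [by congr (p`_ _); lia | by exfalso; lia].
Qed.

Lemma lcoefD p p' (n : nat) k :
  lcoef (p + p', n) k = lcoef (p, n) k + lcoef (p', n) k.
Proof. by rewrite !lcoefE coefD; case: ifP; rewrite ?addr0. Qed.

Lemma lcoefB p p' (n : nat) k :
  lcoef (p - p', n) k = lcoef (p, n) k - lcoef (p', n) k.
Proof. by rewrite !lcoefE coefB; case: ifP; rewrite ?subr0. Qed.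

Lemma lcoefZ x p (n : nat) k : lcoef (x *: p, n) k = x * lcoef (p, n) k.
Proof. by rewrite !lcoefE coefZ; case: ifP; rewrite ?mulr0. Qed.

Lemma lcoef_lsub u v k : lcoef (lsub u v) k = lcoef u k - lcoef v k.
Proof.
case: u v => [p m] [p' n]; rewrite lcoefB !lcoef_mulXn.
by congr (_ - _); apply: lcoef_shift => /=; lia.
Qed.

Lemma lcoef_ladd u v k : lcoef (ladd u v) k = lcoef u k + lcoef v k.
Proof.
case: u v => [p m] [p' n]; rewrite lcoefD !lcoef_mulXn.
by congr (_ + _); apply: lcoef_shift => /=; lia.
Qed.

Lemma lcoef_lmono x j k : lcoef (lmono x j) k = if k == j then x else 0.
Proof.
rewrite lcoefZ lcoefE coefXn /=.
have [->|ne] := eqVneq k j; case: ifP => h; rewrite ?mulr0 //; try lia.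
  by rewrite (_ : _ == _) ?mulr1 //; apply/eqP; lia.
by rewrite (_ : _ == _ = false) ?mulr0 //; apply/eqP; lia.
Qed.

Lemma lcoef_neq0_le_ldeg u k : lcoef u k != 0 -> k <= ldeg u.
Proof.
case: u => p n; rewrite lcoefE /ldeg /=.
case: ifP => [h|]; last by rewrite eqxx.
by apply: contraNT => hk; rewrite nth_default //; lia.
Qed.

Lemma lcoef_ldeg u : lcoef u (ldeg u) = lead_coef u.1.
Proof.
case: u => p n; rewrite lcoefE /ldeg lead_coefE /=; case: ifP => h.
  by congr (_`_ _); lia.
by rewrite nth_default //; lia.
Qed.

Lemma lzeroP u : lzero u <-> u.1 = 0.
Proof.
split=> [u0|u0 k]; last by rewrite lcoefE u0 coef0; case: ifP.
by apply/eqP; rewrite -lead_coef_eq0 -lcoef_ldeg u0.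
Qed.

Lemma lsym_type_ladd u v e c :
  lsym_type u e c -> lsym_type v e c -> lsym_type (ladd u v) e c.
Proof. by move=> hu hv k; rewrite !lcoef_ladd hu hv mulrDr. Qed.

Lemma lsym_type_lsub u v e c :
  lsym_type u e c -> lsym_type v e c -> lsym_type (lsub u v) e c.
Proof. by move=> hu hv k; rewrite !lcoef_lsub hu hv mulrBr. Qed.

Lemma lsym_type_supported u e c :
  lsym_type u e c -> supported (lcoef u) (c - ldeg u) (ldeg u).
Proof.
move=> hu k uk; have uck : lcoef u (c - k) != 0.
  by apply: contra_neq uk => uck; rewrite hu uck mulr0.
have := lcoef_neq0_le_ldeg uk; have := lcoef_neq0_le_ldeg uck; lia.
Qed.

Lemma lsym_type_is_len u e c :
  lsym_type u e c -> u.1 != 0 -> is_len u (2 * ldeg u - c).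
Proof.
move=> hu u1.
have top : lcoef u (ldeg u) != 0 by rewrite lcoef_ldeg lead_coef_eq0.
exists (c - ldeg u), (ldeg u); split=> //; last by lia.
  by apply: contra_neq top => bot; rewrite hu bot mulr0.
exact: lsym_type_supported hu.
Qed.

Lemma lsym_type_len_window u e c s :
  lsym_type u e c -> supported (lcoef u) s (c - s) ->
  lzero u \/ exists n, is_len u n /\ n <= c - 2 * s.
Proof.
move=> hu su; have [/lzeroP|u1] := eqVneq u.1 0; first by left.
right; exists (2 * ldeg u - c); split; first exact: lsym_type_is_len hu u1.
have /su : lcoef u (ldeg u) != 0 by rewrite lcoef_ldeg lead_coef_eq0.
lia.
Qed.

Lemma supported_peel (f g : int -> K) e c s :
  (forall k, f k = e * f (c - k)) -> (forall k, g k = e * g (c - k)) ->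
  supported f s (c - s) -> supported g s (c - s) -> f (c - s) = g (c - s) ->
  supported (fun k => f k - g k) (s + 1) (c - (s + 1)).
Proof.
move=> hf hg sf sg top k; apply: contraR => hk; apply/eqP.
have [->|kt] := eqVneq k (c - s); first by rewrite top subrr.
have [->|ks] := eqVneq k s; first by rewrite hf hg -mulrBr top subrr mulr0.
by rewrite (supported_eq0 sf) ?(supported_eq0 sg) ?subr0 //; lia.
Qed.

End Coefficients.

Definition lmono_sym (K : nzRingType) (x e : K) (c j : int) : laurent K :=
  ladd (lmono x j) (lmono (e * x) (c - j)).

Section Products.

Variable K : comNzRingType.
Implicit Types (b u v : laurent K) (x e : K) (c j k : int).

Lemma lcoef_lmul_ladd b u v k :
  lcoef (lmul b (ladd u v)) k = lcoef (lmul b u) k + lcoef (lmul b v) k.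
Proof.
rewrite /lmul /= mulrDr !mulrA lcoefD !lcoef_mulXn.
by congr (_ + _); apply: lcoef_shift => /=; lia.
Qed.

Lemma lcoef_lmul_lmono b x j k :
  lcoef (lmul b (lmono x j)) k = x * lcoef b (k - j).
Proof.
case: b => p n; rewrite /lmul /= -scalerAr lcoefZ lcoef_mulXn.
by congr (_ * _); apply: lcoef_shift => /=; lia.
Qed.

Lemma lsym_type_lmono x j : lsym_type (lmono x j) 1 (2 * j).
Proof.
move=> k; rewrite !lcoef_lmono mul1r.
by congr (if _ then _ else _); apply/eqP/eqP; lia.
Qed.

Lemma lsym_type_lmono_sym x e c j :
  e ^+ 2 = 1 -> lsym_type (lmono_sym x e c j) e c.
Proof.
move=> e2 k; rewrite !lcoef_ladd !lcoef_lmono.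
have -> : (c - k == j) = (k == c - j) by apply/eqP/eqP; lia.
have -> : (c - k == c - j) = (k == j) by apply/eqP/eqP; lia.
by case: (k == j); case: (k == c - j); ring: e2.
Qed.

Lemma lsym_type_lmul_lmono b eb cb x j :
  eb ^+ 2 = 1 -> lsym_type b eb cb ->
  lsym_type (lmul b (lmono x j)) eb (cb + 2 * j).
Proof.
move=> eb2 hb k; rewrite !lcoef_lmul_lmono (hb (k - j)).
by rewrite (_ : cb - (k - j) = cb + 2 * j - k - j); [ring: eb2 | lia].
Qed.

Lemma lsym_type_lmul_lmono_sym b eb cb x e c j :
  eb ^+ 2 = 1 -> e ^+ 2 = 1 -> lsym_type b eb cb ->
  lsym_type (lmul b (lmono_sym x e c j)) (eb * e) (cb + c).
Proof.
move=> eb2 e2 hb k; rewrite !lcoef_lmul_ladd !lcoef_lmul_lmono.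
rewrite (hb (k - j)) (hb (k - (c - j))).
rewrite (_ : cb - (k - j) = cb + c - k - (c - j)); last by lia.
rewrite (_ : cb - (k - (c - j)) = cb + c - k - j); last by lia.
ring: eb2 e2.
Qed.

End Products.

Section SymmetricDivision.

Variables (K : fieldType) (a b : laurent K) (ea eb : K) (ca cb : int).
Hypotheses (ea2 : ea ^+ 2 = 1) (eb2 : eb ^+ 2 = 1).
Hypotheses (ha : lsym_type a ea ca) (hb : lsym_type b eb cb) (b1 : b.1 != 0).

Local Notation lenb := (2 * ldeg b - cb).
Local Notation rem q := (lsub a (lmul b q)).

Definition division_state (q : laurent K) (s : int) :=
  [/\ lsym_type q (ea * eb) (ca - cb), lsym_type (lmul b q) ea ca
     & supported (lcoef (rem q)) s (ca - s)].

(* b D lies in the window of r and agrees with r at its top end, so that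
   subtracting it shrinks the window (supported_peel). *)
Definition corrects (D : laurent K) (s : int) (x : K) :=
  [/\ lsym_type D (ea * eb) (ca - cb), lsym_type (lmul b D) ea ca,
       supported (lcoef (lmul b D)) s (ca - s) & lcoef (lmul b D) (ca - s) = x].

Lemma division_state0 : division_state (lmono 0 0) (ca - ldeg a).
Proof.
split=> [k|k|].
- by rewrite !lcoef_lmono !if_same mulr0.
- by rewrite !lcoef_lmul_lmono !mul0r mulr0.
- rewrite subKr => k; rewrite lcoef_lsub lcoef_lmul_lmono mul0r subr0.
  exact: (lsym_type_supported ha).
Qed.

Lemma division_state_step q D s :
  division_state q s -> corrects D s (lcoef (rem q) (ca - s)) ->
  division_state (ladd q D) (s + 1).
Proof.
move=> [hq hbq sr] [hD hbD sbD top]; split; first exact: lsym_type_ladd.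
  by move=> k; rewrite !lcoef_lmul_ladd hbq hbD mulrDr.
have peel := supported_peel (lsym_type_lsub ha hbq) hbD sr sbD (esym top).
move=> k; rewrite lcoef_lsub lcoef_lmul_ladd opprD addrA -lcoef_lsub.
exact: peel.
Qed.

Lemma lcoef_b_ldeg : lcoef b (ldeg b) != 0.
Proof. by rewrite lcoef_ldeg lead_coef_eq0. Qed.

Lemma pair_correction (s : int) (x : K) :
  lenb < ca - 2 * s -> exists D, corrects D s x.
Proof.
move=> wide; pose j := ca - s - ldeg b; pose y := x / lcoef b (ldeg b).
have e2 : (ea * eb) ^+ 2 = 1 by rewrite exprMn ea2 eb2 mulr1.
have sb := lsym_type_supported hb.
exists (lmono_sym y (ea * eb) (ca - cb) j); split.
- exact: lsym_type_lmono_sym.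
- have := lsym_type_lmul_lmono_sym y (ca - cb) j eb2 e2 hb.
  by rewrite mulrCA -expr2 eb2 mulr1 subrKC.
- move=> k; rewrite lcoef_lmul_ladd !lcoef_lmul_lmono; apply: contraR => hk.
  by rewrite !(supported_eq0 sb) ?mulr0 ?addr0 // /j; lia.
- rewrite lcoef_lmul_ladd !lcoef_lmul_lmono.
  rewrite [X in _ + _ * X](supported_eq0 sb) /j; last by lia.
  by rewrite mulr0 addr0 (_ : ca - s - _ = ldeg b) ?divfK ?lcoef_b_ldeg //; lia.
Qed.

Lemma single_correction (s : int) (x : K) :
  ca - 2 * s = lenb -> ea * eb = 1 -> exists D, corrects D s x.
Proof.
move=> tight e1; pose j := ca - s - ldeg b; pose y := x / lcoef b (ldeg b).
have ea_eb : eb = ea by rewrite -[eb]mul1r -ea2 expr2 -mulrA e1 mulr1.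
have sb := lsym_type_supported hb.
exists (lmono y j); split.
- rewrite e1 (_ : ca - cb = 2 * j); first exact: lsym_type_lmono.
  by rewrite /j; lia.
- have := lsym_type_lmul_lmono y j eb2 hb.
  by rewrite ea_eb (_ : cb + 2 * j = ca) // /j; lia.
- move=> k; rewrite lcoef_lmul_lmono; apply: contraR => hk.
  by rewrite (supported_eq0 sb) ?mulr0 // /j; lia.
- rewrite lcoef_lmul_lmono (_ : ca - s - j = ldeg b) ?divfK ?lcoef_b_ldeg //.
  by rewrite /j; lia.
Qed.

Lemma division_state_shrink (T : int) :
  (forall s : int, T < ca - 2 * s ->
     lenb < ca - 2 * s \/ (ca - 2 * s = lenb /\ ea * eb = 1)) ->
  forall q s, division_state q s ->
  exists q' s', division_state q' s' /\ ca - 2 * s' <= T.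
Proof.
move=> hT q s st; have [n] : exists n : nat, ca - 2 * s <= T + n%:Z.
  by exists (absz (ca - 2 * s - T)%R); lia.
elim: n q s st => [|n IH] q s st hn; first by exists q, s; split=> //; lia.
have [|wide] := lerP (ca - 2 * s) T; first by exists q, s.
have [D hD] : exists D, corrects D s (lcoef (rem q) (ca - s)).
  case: (hT s wide) => [|[]]; first exact: pair_correction.
  exact: single_correction.
by apply: (IH (ladd q D) (s + 1)); [apply: division_state_step | lia].
Qed.

Lemma symmetric_division (T : int) :
  (forall s : int, T < ca - 2 * s ->
     lenb < ca - 2 * s \/ (ca - 2 * s = lenb /\ ea * eb = 1)) ->
  exists q, [/\ lsym_type q (ea * eb) (ca - cb), lsym_type (rem q) ea ca
    & lzero (rem q) \/ exists n, is_len (rem q) n /\ n <= T].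
Proof.
move=> hT; have [q [s [[hq hbq sr] small]]] :=
  division_state_shrink hT division_state0.
have hr := lsym_type_lsub ha hbq.
exists q; split=> //; case: (lsym_type_len_window hr sr) => [|[n [hn le_n]]].
  by left.
by right; exists n; split=> //; lia.
Qed.

End SymmetricDivision.

Theorem lemma3p6 (R : realType) (a b : laurent R[i])
  (eps_a eps_b : R[i]) (c_a c_b : int)
  (heps_a : eps_a = 1 \/ eps_a = -1) (heps_b : eps_b = 1 \/ eps_b = -1)
  (ha : lsym_type a eps_a c_a) (hb : lsym_type b eps_b c_b) (hb0 : ~ lzero b) :
  ((eps_a * eps_b = 1 \/ odd `|c_a - c_b|%N) ->
     exists q : laurent R[i],
       let r := lsub a (lmul b q) in
       [/\ lsym_type q (eps_a * eps_b) (c_a - c_b), lsym_type r eps_a c_a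
         & len_lt r b]) /\
  ((eps_a * eps_b = -1 /\ ~~ odd `|c_a - c_b|%N) ->
     exists q : laurent R[i],
       let r := lsub a (lmul b q) in
       [/\ lsym_type q (eps_a * eps_b) (c_a - c_b), lsym_type r eps_a c_a
         & len_le r b]).
Proof.
have sign2 (e : R[i]) : e = 1 \/ e = -1 -> e ^+ 2 = 1.
  by case=> ->; rewrite ?sqrrN expr1n.
have b1 : b.1 != 0 by apply/eqP => /lzeroP /hb0.
have len_b := lsym_type_is_len hb b1.
have division := symmetric_division (sign2 _ heps_a) (sign2 _ heps_b) ha hb b1.
split=> [hcase | _].
- have hT (s : int) : 2 * ldeg b - c_b - 1 < c_a - 2 * s ->
      2 * ldeg b - c_b < c_a - 2 * s \/
      (c_a - 2 * s = 2 * ldeg b - c_b /\ eps_a * eps_b = 1).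
    move=> wide; have [|short] := ltrP (2 * ldeg b - c_b) (c_a - 2 * s).
      by left.
    by right; split; [lia | case: hcase => // odd_c; lia].
  have [q [hq hr [|[n [hn le_n]]]]] := division _ hT; exists q; split=> //.
  + by left.
  + by right; exists n, (2 * ldeg b - c_b); split=> //; lia.
- have [q [hq hr [|[n [hn le_n]]]]] := division _ (fun s => @or_introl _ _).
  all: exists q; split=> //.
  + by left.
  + by right; exists n, (2 * ldeg b - c_b).
Qed.
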